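(* Let $A$ be a domain equipped with an ultrametric absolute value $|\cdot|$ and let $A_0$ be a dense subring of $A$ such that $A=A_0+gA$ for every nonzero $g\in A_0$. Put $E=\operatorname{Quot}(A)$, $E_0=\operatorname{Quot}(A_0)$, and let $E_1,E_2$ be subfields of $E$ with $E_0\subseteq E_2$. Let $n\in\mathbb{N}$ and suppose: (i) the localization $(A_0\setminus\{0\})^{-1}A$ equals $E$; (ii) for every $b\in\operatorname{Mat}_n(A)$ with $|b-\mathbb{1}|<1$ there exist $b_1\in\operatorname{GL}_n(E_1)$ and $b_2\in\operatorname{GL}_n(E_2)$ with $b=b_1b_2$. Then $\operatorname{GL}_n(E)=\operatorname{GL}_n(E_1)\cdot\operatorname{GL}_n(E_2)$.
   Context: For a matrix $(a_{ij})$ over $A$, $|(a_{ij})|=\max_{i,j}|a_{ij}|$; $\mathbb{1}$ denotes the $n\times n$ identity matrix. ''Dense'' refers to the topology induced by $|\cdot|$. *)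

From HB Require Import structures.
From mathcomp Require Import all_boot all_order all_algebra.
Set Implicit Arguments. Unset Strict Implicit. Unset Printing Implicit Defensive.
Import Order.TTheory GRing.Theory Num.Theory.
Local Open Scope ring_scope.

Definition ultrametric_absval (A : nzRingType) (R : realFieldType) (v : A -> R) : Prop :=
  [/\ forall x, 0 <= v x,
      forall x, v x = 0 <-> x = 0,
      forall x y, v (x * y) = v x * v y
    & forall x y, v (x + y) <= Num.max (v x) (v y)].

Definition mxabs (A : nzRingType) (R : realFieldType) (v : A -> R) (m n : nat)
  (M : 'M[A]_(m, n)) : R :=
  \big[Num.max/0]_(i < m) \big[Num.max/0]_(j < n) v (M i j).

Definition dense_in (A : nzRingType) (R : realFieldType) (v : A -> R) (S : {pred A}) : Prop :=
  forall a : A, forall eps : R, 0 < eps -> exists2 a0, a0 \in S & v (a - a0) < eps.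

Definition GLover (E : fieldType) (n : nat) (F : {pred E}) (M : 'M[E]_n) : Prop :=
  M \is a mxOver F /\ M \in unitmx.

From HB Require Import structures.
From mathcomp Require Import all_boot all_order all_algebra.
From mathcomp Require Import lra.
Set Implicit Arguments. Unset Strict Implicit. Unset Printing Implicit Defensive.
Import Order.TTheory GRing.Theory Num.Theory.
Local Open Scope ring_scope.

(* Given x in GL_n(E), we look for
   c in GL_n(E_2) such that y = x c lies in Mat_n(A) with |y - 1| < 1; then
   hypothesis (ii) gives y = b1 b2 and x = b1 (b2 c^-1).  To find c:
   - by (i), x has a common denominator G in A_0, i.e. alpha = G x is in Mat_n(A);
   - the entries of alpha are bounded by some K > 0;
   - every z in E can be written z = c + G t with c in E_0 and |t| < 1/K: write
     z = a/q by (i), a = c1 + G q s1 by the hypothesis A = A_0 + (Gq)A, and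
     approximate s1 by s in A_0 using density;
   - applying this to the entries of x^-1 gives x^-1 = c + G T, hence
     x c = 1 - alpha T, whose distance to 1 is < 1 by the ultrametric inequality. *)

Lemma det_mxOver (R : comNzRingType) (S : subringClosed R) n (M : 'M[R]_n) :
  M \is a mxOver S -> \det M \in S.
Proof.
move=> /mxOverP MS; apply: rpred_sum => s _.
apply: rpredM; first exact: rpredX (rpredN1 _).
by apply: rpred_prod => i _; exact: MS.
Qed.

Lemma invmx_mxOver (F : fieldType) (S : divringClosed F) n (M : 'M[F]_n) :
  M \is a mxOver S -> invmx M \is a mxOver S.
Proof.
move=> MS; rewrite /invmx; case: ifP => // _.
apply/mxOverP => i j; rewrite !mxE.
apply: rpredM; first by rewrite rpredV; exact: det_mxOver.
apply: rpredM; first exact: rpredX (rpredN1 _).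
by apply: det_mxOver; apply/mxOverP => a b; rewrite !mxE; exact: (mxOverP MS).
Qed.

Lemma mx_choice (T : Type) (m n : nat) (P : 'I_m -> 'I_n -> T -> Prop) :
  (forall i j, exists t, P i j t) ->
  exists M : 'M[T]_(m, n), forall i j, P i j (M i j).
Proof.
move=> hP.
have /fin_all_exists [f hf] : forall i, exists f : 'I_n -> T, forall j, P i j (f j).
  by move=> i; apply: fin_all_exists.
by exists (\matrix_(i, j) f i j) => i j; rewrite mxE.
Qed.

Section UltrametricAbsval.
Variables (A : nzRingType) (R : realFieldType) (v : A -> R).
Hypothesis hv : ultrametric_absval v.

Lemma absval_ge0 x : 0 <= v x. Proof. by case: hv. Qed.

Lemma absval0 : v 0 = 0. Proof. by case: hv => _ h _ _; apply/h. Qed.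

Lemma absval1 : v 1 = 1.
Proof.
case: hv => _ h hM _.
have v1_neq0 : v 1 != 0 by apply/eqP => /h /eqP; rewrite oner_eq0.
by apply: (mulfI v1_neq0); rewrite -hM !mulr1.
Qed.

Lemma absvalN x : v (- x) = v x.
Proof.
case: hv => _ _ hM _.
have sq : v (-1) * v (-1) = 1 by rewrite -hM mulrNN mulr1 absval1.
have vN1 : v (-1) = 1 by have := absval_ge0 (-1); nra.
by rewrite -mulN1r hM vN1 mul1r.
Qed.

Lemma absval_sum_lt1 (I : Type) (r : seq I) (P : pred I) (F : I -> A) :
  (forall i, P i -> v (F i) < 1) -> v (\sum_(i <- r | P i) F i) < 1.
Proof.
move=> hF; apply: (big_ind (fun z => v z < 1)) => //; first by rewrite absval0.
move=> x y hx hy; case: hv => _ _ _ hD.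
by apply: le_lt_trans (hD x y) _; rewrite gt_max hx hy.
Qed.

Lemma mx_absval_bound m n (M : 'M[A]_(m, n)) :
  exists2 K, 0 < K & forall i j, v (M i j) < K.
Proof.
exists (1 + \sum_(p : 'I_m * 'I_n) v (M p.1 p.2)).
  by rewrite ltr_pwDl // sumr_ge0 // => p _; exact: absval_ge0.
move=> i j; rewrite (bigD1 (i, j)) //=.
have : 0 <= \sum_(p | p != (i, j)) v (M p.1 p.2).
  by rewrite sumr_ge0 // => p _; exact: absval_ge0.
lra.
Qed.

Lemma mxabs_lt1 m n (M : 'M[A]_(m, n)) :
  (forall i j, v (M i j) < 1) -> mxabs v M < 1.
Proof.
move=> hM; apply: (big_ind (fun z => z < 1)) => //.
- by move=> x y hx hy; rewrite gt_max hx hy.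
- move=> i _; apply: (big_ind (fun z => z < 1)) => //.
  by move=> x y hx hy; rewrite gt_max hx hy.
Qed.

Lemma near_identity n (M N : 'M[A]_n) (K : R) :
  (forall i k, v (M i k) < K) -> (forall k j, v (N k j) * K < 1) ->
  mxabs v ((1%:M - M *m N) - 1%:M) < 1.
Proof.
move=> hM hN; rewrite addrAC subrr add0r.
apply: mxabs_lt1 => i j; rewrite !mxE absvalN.
apply: absval_sum_lt1 => k _; case: hv => _ _ hMul _; rewrite hMul.
have := hM i k; have := hN k j.
have := absval_ge0 (M i k); have := absval_ge0 (N k j); nra.
Qed.

End UltrametricAbsval.

Lemma shifted_product (A : idomainType) n (x c : 'M[{fraction A}]_n)
    (alpha T : 'M[A]_n) (G : A) :
  x \in unitmx -> map_mx (@tofrac A) alpha = tofrac G *: x ->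
  invmx x - c = tofrac G *: map_mx (@tofrac A) T ->
  x *m c = map_mx (@tofrac A) (1%:M - alpha *m T).
Proof.
move=> ux e_alpha e_c.
have -> : c = invmx x - tofrac G *: map_mx (@tofrac A) T by rewrite -e_c opprB addrC subrK.
rewrite mulmxBr mulmxV // map_mxB map_mx1 map_mxM e_alpha.
by rewrite -scalemxAl scalemxAr.
Qed.

Section Approximation.
Variables (A : idomainType) (R : realFieldType) (v : A -> R).
Variables (A0 : subringClosed A) (E2 : divringClosed {fraction A}).
Hypothesis hdense : dense_in v A0.
Hypothesis hdiv : forall g, g \in A0 -> g != 0 ->
  forall a : A, exists2 a0, a0 \in A0 & exists c : A, a = a0 + g * c.
Hypothesis hE0 : forall a b, a \in A0 -> b \in A0 -> b != 0 ->
  tofrac a / tofrac b \in E2.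
Hypothesis hloc : forall x : {fraction A},
  exists a : A, exists2 g : A, (g \in A0) && (g != 0) & x = tofrac a / tofrac g.

Lemma mx_common_denominator m n (X : 'M[{fraction A}]_(m, n)) :
  exists G, exists alpha : 'M[A]_(m, n),
    [/\ G \in A0, G != 0 & map_mx (@tofrac A) alpha = tofrac G *: X].
Proof.
have fraction_entries i j : exists ag : A * A,
    ((ag.2 \in A0) && (ag.2 != 0)) /\ X i j = tofrac ag.1 / tofrac ag.2.
  by have [a [g hg e]] := hloc (X i j); exists (a, g).
have [D hD] := mx_choice fraction_entries.
have den_nz p : (D p.1 p.2).2 != 0 by case: (hD p.1 p.2) => /andP[].
pose G := \prod_(p : 'I_m * 'I_n) (D p.1 p.2).2.
exists G, (\matrix_(i, j) ((D i j).1 * \prod_(p | p != (i, j)) (D p.1 p.2).2)).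
split.
- by apply: rpred_prod => p _; case: (hD p.1 p.2) => /andP[].
- by apply/prodf_neq0 => p _.
- apply/matrixP => i j; rewrite !mxE /G [in RHS](bigD1 (i, j)) //= !rmorphM.
  case: (hD i j) => _ ->.
  have gnz : tofrac (D i j).2 != 0 :> {fraction A} by rewrite tofrac_eq0 (den_nz (i, j)).
  by rewrite [RHS]mulrAC [in RHS]mulrCA divff // mulr1.
Qed.

Lemma approx_entry (z : {fraction A}) (G : A) (eps : R) :
  G \in A0 -> G != 0 -> 0 < eps ->
  exists c, exists t, [/\ c \in E2, v t < eps & z - c = tofrac G * tofrac t].
Proof.
move=> GA0 Gnz eps_gt0.
have [a [q /andP[qA0 qnz] ->]] := hloc z.
have [c1 c1A0 [s1 ->]] := hdiv (rpredM GA0 qA0) (mulf_neq0 Gnz qnz) a.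
have [s sA0 vs] := hdense s1 eps_gt0.
exists (tofrac (c1 + G * q * s) / tofrac q), (s1 - s); split => //.
  by apply: hE0 => //; rewrite rpredD // !rpredM.
have : tofrac q != 0 :> {fraction A} by rewrite tofrac_eq0.
rewrite !rmorphD !rmorphM rmorphN /=.
move=> q'_nz; rewrite -mulrBl opprD addrACA subrr add0r -mulrBr.
by rewrite mulrAC mulfK.
Qed.

Lemma approx_mx m n (X : 'M[{fraction A}]_(m, n)) (G : A) (eps : R) :
  G \in A0 -> G != 0 -> 0 < eps ->
  exists c, exists T : 'M[A]_(m, n), [/\ c \is a mxOver E2,
    forall i j, v (T i j) < eps & X - c = tofrac G *: map_mx (@tofrac A) T].
Proof.
move=> GA0 Gnz eps_gt0.
have approx_entries i j : exists ct : {fraction A} * A,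
    [/\ ct.1 \in E2, v ct.2 < eps & X i j - ct.1 = tofrac G * tofrac ct.2].
  by have [c [t h]] := approx_entry (X i j) GA0 Gnz eps_gt0; exists (c, t).
have [CT hCT] := mx_choice approx_entries.
exists (\matrix_(i, j) (CT i j).1), (\matrix_(i, j) (CT i j).2); split.
- by apply/mxOverP => i j; rewrite mxE; case: (hCT i j).
- by move=> i j; rewrite mxE; case: (hCT i j).
- by apply/matrixP => i j; rewrite !mxE; case: (hCT i j).
Qed.

End Approximation.

Theorem proposition3p2
  (A : idomainType) (R : realFieldType) (v : A -> R)
  (A0 : {pred A}) (E1 E2 : {pred {fraction A}}) (n : nat) :
  ultrametric_absval v ->
  subring_closed A0 ->
  dense_in v A0 ->
  (forall g, g \in A0 -> g != 0 ->
     forall a : A, exists2 a0, a0 \in A0 & exists c : A, a = a0 + g * c) ->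
  divring_closed E1 ->
  divring_closed E2 ->
  (* E_0 = Quot(A_0) is contained in E_2 *)
  (forall a b, a \in A0 -> b \in A0 -> b != 0 -> tofrac a / tofrac b \in E2) ->
  (* (i) (A_0 \ {0})^{-1} A = E *)
  (forall x : {fraction A},
     exists a : A, exists2 g : A, (g \in A0) && (g != 0) & x = tofrac a / tofrac g) ->
  (* (ii) *)
  (forall b : 'M[A]_n, mxabs v (b - 1%:M) < 1 ->
     exists (b1 : 'M[{fraction A}]_n) (b2 : 'M[{fraction A}]_n), [/\ GLover E1 b1, GLover E2 b2 & map_mx (@tofrac A) b = b1 *m b2]) ->
  (* GL_n(E) = GL_n(E_1) GL_n(E_2) *)
  forall x : 'M[{fraction A}]_n,
    x \in unitmx <-> exists (b1 : 'M[{fraction A}]_n) (b2 : 'M[{fraction A}]_n), [/\ GLover E1 b1, GLover E2 b2 & x = b1 *m b2].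
Proof.
move=> hv hA0 hdense hdiv _ hE2 hE0 hloc hii x; split; last first.
  by move=> [b1 [b2 [[_ u1] [_ u2] ->]]]; rewrite unitmx_mul u1 u2.
move=> ux.
pose S0 : subringClosed A := HB.pack A0 (GRing.isSubringClosed.Build A A0 hA0).
pose S2 : divringClosed _ := HB.pack E2 (GRing.isDivringClosed.Build _ E2 hE2).
have [G [alpha [GA0 Gnz e_alpha]]] := @mx_common_denominator _ S0 hloc _ _ x.
have [K K_gt0 alphaK] := mx_absval_bound hv alpha.
have invK_gt0 : 0 < K^-1 by rewrite invr_gt0.
have [c [T [cE2 TK e_c]]] :=
  @approx_mx _ _ v S0 S2 hdense hdiv hE0 hloc _ _ (invmx x) G K^-1 GA0 Gnz invK_gt0.
have e_xc := shifted_product ux e_alpha e_c.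
have TK' k j : v (T k j) * K < 1 by rewrite -ltr_pdivlMr // mul1r.
have [b1 [b2 [GL1 [o2 u2] e_b]]] := hii _ (near_identity hv alphaK TK').
have uc : c \in unitmx.
  have : x *m c \in unitmx by rewrite e_xc e_b unitmx_mul u2 andbT; case: GL1.
  by rewrite unitmx_mul => /andP[].
exists b1, (b2 *m invmx c); split; first exact: GL1.
  split; last by rewrite unitmx_mul u2 unitmx_inv uc.
  by apply: (mxOverM (S := S2)) => //; exact: invmx_mxOver.
by rewrite mulmxA -e_b -e_xc mulmxK.
Qed.
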